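(* Consider a Markov decision process with stochastic policy $\pi$, transition density $T$ and initial state distribution $\alpha$. Let $0<\beta<\gamma<1$. Let $\rho_T(s,a)$ be the normalized occupancy measure generated by $(\alpha,\pi,T)$ with discount factor $\gamma$, and let $\rho_T^\beta(s,a)$ be the normalized occupancy measure generated by $(\rho_T,\pi,T)$ with discount factor $\beta$ (i.e. trajectories started from $(s_0,a_0)\sim\rho_T$ and continued under $\pi$ and $T$). Then $$D_{TV}(\rho_T\,\|\,\rho_T^\beta)\le\frac{(1-\gamma)\beta}{\gamma-\beta}.$$
   Context: The normalized occupancy measure generated by $(\mu,\pi,T)$ with discount factor $\lambda\in(0,1)$ is $\sum_{t=0}^\infty(1-\lambda)\lambda^t\,\mathbb{P}(s_t=s,a_t=a)$, where the trajectory starts from $\mu$ and evolves by $a_t\sim\pi(\cdot\mid s_t)$, $s_{t+1}\sim T(\cdot\mid s_t,a_t)$. The total variation distance is $D_{TV}(p\,\|\,q)=\frac12\int|p-q|$. *)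

From HB Require Import structures.
From mathcomp Require Import all_boot all_order all_algebra.
From mathcomp Require Import all_classical all_reals all_analysis.
Set Implicit Arguments.
Unset Strict Implicit.
Unset Printing Implicit Defensive.
Import Order.TTheory GRing.Theory Num.Theory.
Local Open Scope classical_set_scope.
Local Open Scope ring_scope.
Local Open Scope ereal_scope.

(* law of (s_0, a_0) when s_0 ~ alpha and a_0 ~ pi(. | s_0) *)
Definition init_sa {R : realType} {d1 d2 : measure_display}
  {S : measurableType d1} {A : measurableType d2}
  (alpha : set S -> \bar R) (pi : S -> {measure set A -> \bar R})
  : set (S * A) -> \bar R :=
  fun B => \int[alpha]_s pi s (xsection B s).

(* one step: law of (s_{t+1}, a_{t+1}) from the law m of (s_t, a_t):
   s_{t+1} ~ T(. | s_t, a_t), a_{t+1} ~ pi(. | s_{t+1}) *)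
Definition sa_step {R : realType} {d1 d2 : measure_display}
  {S : measurableType d1} {A : measurableType d2}
  (pi : S -> {measure set A -> \bar R}) (T : S * A -> {measure set S -> \bar R})
  (m : set (S * A) -> \bar R) : set (S * A) -> \bar R :=
  fun B => \int[m]_z \int[T z]_s pi s (xsection B s).

Fixpoint sa_marginal {R : realType} {d1 d2 : measure_display}
  {S : measurableType d1} {A : measurableType d2}
  (pi : S -> {measure set A -> \bar R}) (T : S * A -> {measure set S -> \bar R})
  (m0 : set (S * A) -> \bar R) (t : nat) : set (S * A) -> \bar R :=
  match t with
  | 0%N => m0
  | t'.+1 => sa_step pi T (sa_marginal pi T m0 t')
  end.

Definition occupancy {R : realType} {d1 d2 : measure_display}
  {S : measurableType d1} {A : measurableType d2}
  (pi : S -> {measure set A -> \bar R}) (T : S * A -> {measure set S -> \bar R})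
  (lambda : R) (m0 : set (S * A) -> \bar R) : set (S * A) -> \bar R :=
  fun B => \sum_(0 <= t <oo) (((1 - lambda) * lambda ^+ t)%:E
                              * sa_marginal pi T m0 t B).

(* total variation distance between (probability) measures on a measurable
   type: sup over measurable sets of |p B - q B|  (= 1/2 int |p - q|) *)
Definition TV_dist {R : realType} {d : measure_display} {X : measurableType d}
  (p q : set X -> \bar R) : \bar R :=
  ereal_sup [set `|p B - q B| | B in [set B | measurable B]].

(* Fix a measurable set B and let a_t be the probability that (s_t, a_t) lies
   in B.  Then rho_T(B) = p_0, where p_k = sum_t (1 - gamma) gamma^t a_(t+k) is
   the probability that the chain started from rho_T is in B at time k, and
   rho_T^beta(B) = P := sum_k (1 - beta) beta^k p_k.  The shifted means satisfy
   p_k = (1 - gamma) a_k + gamma p_(k+1).  Averaging this identity with weights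
   (1 - beta) beta^k writes P = (1 - gamma) A + gamma W, while peeling off the
   first term gives P = (1 - beta) p_0 + beta W, with A and W the
   beta-averages of a and of the tail of p.  Eliminating W yields
   (gamma - beta) (p_0 - P) = beta (1 - gamma) (A - p_0), and A, p_0 lie in
   [0, 1]. *)

From HB Require Import structures.
From mathcomp Require Import all_boot all_order all_algebra.
From mathcomp Require Import all_classical all_reals all_analysis.
From mathcomp Require Import measurable_realfun ring lra.
Import Order.TTheory GRing.Theory Num.Theory.
Import numFieldTopology.Exports.
Local Open Scope classical_set_scope.
Local Open Scope ring_scope.
Local Open Scope ereal_scope.

Lemma fineK_in01 {R : realType} (x : \bar R) : 0 <= x <= 1 -> (fine x)%:E = x.
Proof.
case/andP=> x0 x1; apply: fineK.
by rewrite ge0_fin_numE// (le_lt_trans x1) ?ltry.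
Qed.

Lemma fine_in01 {R : realType} (x : \bar R) : 0 <= x <= 1 ->
  (0 <= fine x <= 1)%R.
Proof.
move=> x01; have /andP[x0 x1] := x01.
by rewrite fine_ge0//= -lee_fin fineK_in01.
Qed.

Definition discount_weight {R : realType} (l : R) (t : nat) : R :=
  (1 - l) * l ^+ t.

Definition discounted_mean {R : realType} (l : R) (u : nat -> R) : \bar R :=
  \sum_(0 <= t <oo) (discount_weight l t * u t)%:E.

Section discounted_mean.
Context {R : realType} {l : R}.
Hypotheses (l_ge0 : (0 <= l)%R) (l_lt1 : (l < 1)%R).

Lemma discount_weight_ge0 t : (0 <= discount_weight l t)%R.
Proof. by rewrite mulr_ge0 ?exprn_ge0// subr_ge0 ltW. Qed.

Let weighted_ge0 t x : (0 <= x)%R -> 0 <= (discount_weight l t * x)%:E.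
Proof. by move=> ?; rewrite lee_fin mulr_ge0// discount_weight_ge0. Qed.

Lemma discounted_mean1 : discounted_mean l (fun=> 1%R) = 1.
Proof.
have l_norm : (`|l| < 1)%R by rewrite ger0_norm.
rewrite /discounted_mean.
under eq_fun do under eq_bigr do rewrite mulr1.
rewrite (_ : (fun n => _) = EFin \o series (geometric (1 - l) l)); last first.
  by apply/funext => n; rewrite /series /= sumEFin.
rewrite EFin_lim; last exact: is_cvg_geometric_series.
rewrite (cvg_lim _ (@cvg_geometric_series R (1 - l)%R l l_norm))//.
by rewrite divff// subr_eq0 gt_eqF.
Qed.

Lemma discounted_mean_in01 u : (forall t, 0 <= u t <= 1)%R ->
  0 <= discounted_mean l u <= 1.
Proof.
move=> u01; apply/andP; split.
  by apply: nneseries_ge0 => t _ _; apply: weighted_ge0; case/andP: (u01 t).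
rewrite -discounted_mean1; apply: lee_nneseries => t _.
  by move=> _; apply: weighted_ge0; case/andP: (u01 t).
rewrite lee_fin ler_wpM2l ?discount_weight_ge0//.
by case/andP: (u01 t).
Qed.

Lemma discounted_mean_recl u : (forall t, 0 <= u t)%R ->
  discounted_mean l u =
  ((1 - l) * u 0%N)%:E + l%:E * discounted_mean l (fun t => u t.+1).
Proof.
move=> u0; rewrite /discounted_mean nneseries_recl//; last first.
  by move=> t _; exact/weighted_ge0/u0.
congr (_ + _); first by rewrite /discount_weight expr0 mulr1.
rewrite -(nneseries_addn (f := fun t => (discount_weight l t * u t)%:E) 1%N).
  rewrite -nneseriesZl; last by move=> t _; exact/weighted_ge0/u0.
  apply: eq_eseriesr => t _; rewrite -EFinM addn1 /discount_weight exprS.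
  by congr EFin; ring.
by move=> t; exact/weighted_ge0/u0.
Qed.

Lemma discounted_meanD (x y : R) u v : (0 <= x)%R -> (0 <= y)%R ->
    (forall t, 0 <= u t)%R -> (forall t, 0 <= v t)%R ->
  discounted_mean l (fun t => x * u t + y * v t)%R =
  x%:E * discounted_mean l u + y%:E * discounted_mean l v.
Proof.
move=> x0 y0 u0 v0; rewrite /discounted_mean -!nneseriesZl; last 2 first.
- by move=> t _; exact/weighted_ge0/v0.
- by move=> t _; exact/weighted_ge0/u0.
rewrite -nneseriesD; last 2 first.
- by move=> t _ _; rewrite mule_ge0// weighted_ge0.
- by move=> t _ _; rewrite mule_ge0// weighted_ge0.
by apply: eq_eseriesr => t _; rewrite -!EFinM -EFinD; congr EFin; ring.
Qed.

Lemma fine_discounted_mean_recl u : (forall t, 0 <= u t <= 1)%R ->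
  fine (discounted_mean l u) =
  ((1 - l) * u 0%N + l * fine (discounted_mean l (fun t => u t.+1)))%R.
Proof.
move=> u01; have u0 t : (0 <= u t)%R by case/andP: (u01 t).
rewrite discounted_mean_recl// -[discounted_mean l _]fineK_in01; last first.
  by apply: discounted_mean_in01 => t; exact: u01.
by rewrite -EFinM -EFinD.
Qed.

Lemma fine_discounted_meanD (x y : R) u v : (0 <= x)%R -> (0 <= y)%R ->
    (forall t, 0 <= u t <= 1)%R -> (forall t, 0 <= v t <= 1)%R ->
  fine (discounted_mean l (fun t => x * u t + y * v t)%R) =
  (x * fine (discounted_mean l u) + y * fine (discounted_mean l v))%R.
Proof.
move=> x0 y0 u01 v01; rewrite discounted_meanD//; last 2 first.
- by move=> t; case/andP: (u01 t).
- by move=> t; case/andP: (v01 t).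
rewrite -[discounted_mean l u]fineK_in01 ?discounted_mean_in01//.
by rewrite -[discounted_mean l v]fineK_in01 ?discounted_mean_in01// -!EFinM.
Qed.

End discounted_mean.

Section discounted_mean_shift.
Context {R : realType}.
Variables beta gamma : R.
Hypotheses (beta_gt0 : (0 < beta)%R) (beta_lt_gamma : (beta < gamma)%R)
  (gamma_lt1 : (gamma < 1)%R).

Lemma dist_le_of_decompositions (p0 P A W : R) :
    (0 <= p0 <= 1)%R -> (0 <= A <= 1)%R ->
    P = ((1 - gamma) * A + gamma * W)%R -> P = ((1 - beta) * p0 + beta * W)%R ->
  (`|p0 - P| <= (1 - gamma) * beta / (gamma - beta))%R.
Proof.
move=> /andP[p0_ge0 p0_le1] /andP[A_ge0 A_le1] P_mix P_recl.
have gap : ((gamma - beta) * (p0 - P) = beta * (1 - gamma) * (A - p0))%R.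
  have := congr1 (fun x => gamma * x)%R P_recl.
  have := congr1 (fun x => beta * x)%R P_mix.
  by move=> /= ? ?; nra.
have gap_le1 : (`|A - p0| <= 1)%R by rewrite ler_norml; lra.
have gamma_beta_gt0 : (0 < gamma - beta)%R by rewrite subr_gt0.
have weight_ge0 : (0 <= beta * (1 - gamma))%R.
  by rewrite mulr_ge0 ?subr_ge0 ?ltW.
rewrite ler_pdivlMr// -[X in (_ * X <= _)%R]gtr0_norm//.
rewrite -normrM mulrC gap normrM ger0_norm// [X in (_ <= X)%R]mulrC.
exact: ler_piMr.
Qed.

Lemma discounted_mean_shift_dist (a : nat -> R) :
    (forall t, 0 <= a t <= 1)%R ->
  `|discounted_mean gamma a - discounted_mean beta
      (fun k => fine (discounted_mean gamma (fun t => a (t + k)%N)))|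
  <= (((1 - gamma) * beta) / (gamma - beta))%:E.
Proof.
move=> a01.
have beta_ge0 : (0 <= beta)%R by exact: ltW.
have gamma_ge0 : (0 <= gamma)%R by exact: ltW (lt_trans beta_gt0 _).
have beta_lt1 : (beta < 1)%R by exact: lt_trans gamma_lt1.
pose p k := fine (discounted_mean gamma (fun t => a (t + k)%N)).
have p01 k : (0 <= p k <= 1)%R by apply/fine_in01/discounted_mean_in01.
have p_recl k : p k = ((1 - gamma) * a k + gamma * p k.+1)%R.
  rewrite /p fine_discounted_mean_recl// add0n.
  congr (_ + _ * fine (discounted_mean _ _))%R.
  by apply/funext => t; rewrite addSnnS.
pose A := fine (discounted_mean beta a).
pose P := fine (discounted_mean beta p).
pose W := fine (discounted_mean beta (fun k => p k.+1)).
have P_mix : (P = (1 - gamma) * A + gamma * W)%R.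
  rewrite /P (_ : p = fun k => (1 - gamma) * a k + gamma * p k.+1)%R.
    by rewrite fine_discounted_meanD// subr_ge0 ltW.
  by apply/funext => k; rewrite -p_recl.
have P_recl : (P = (1 - beta) * p 0%N + beta * W)%R.
  exact: fine_discounted_mean_recl.
rewrite -(_ : (p 0%N)%:E = discounted_mean gamma a); last first.
  rewrite fineK_in01 ?discounted_mean_in01//.
  by congr discounted_mean; apply/funext => t; rewrite addn0.
rewrite -(fineK_in01 _ (discounted_mean_in01 beta_ge0 beta_lt1 _ p01)) -/P.
rewrite -EFinB abse_EFin lee_fin; apply: dist_le_of_decompositions P_mix P_recl.
- exact: p01.
- exact/fine_in01/discounted_mean_in01.
Qed.

End discounted_mean_shift.

Section mixture.
Context {R : realType} {d d' : measure_display}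
  {X : measurableType d} {Y : measurableType d'}.
Variables (m : {measure set X -> \bar R}) (k : R.-ker X ~> Y).

Definition mixture : set Y -> \bar R := fun U => \int[m]_x k x U.

Let mixture0 : mixture set0 = 0.
Proof. by apply: integral0_eq => x _; rewrite measure0. Qed.

Let mixture_ge0 U : 0 <= mixture U.
Proof. exact: integral_ge0. Qed.

Let mixture_sigma_additive : semi_sigma_additive mixture.
Proof.
move=> U mU tU mUU; rewrite [X in _ --> X](_ : _ =
    \int[m]_x \sum_(n <oo) k x (U n)); last first.
  apply: eq_integral => x _; apply/esym/cvg_lim => //.
  exact: measure_semi_sigma_additive.
apply/cvg_closeP; split.
  by apply: is_cvg_nneseries => n _ _; exact: integral_ge0.
by rewrite closeE// integral_nneseries// => n; exact: measurable_kernel.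
Qed.

HB.instance Definition _ := isMeasure.Build _ _ _ mixture
  mixture0 mixture_ge0 mixture_sigma_additive.

Lemma mixture_setT : m setT = 1 -> (forall x, k x setT = 1) -> mixture setT = 1.
Proof.
move=> m1 k1; rewrite /mixture.
by under eq_integral do rewrite k1; rewrite integral_cst// mul1e.
Qed.

End mixture.

Lemma mixture_mseries {R : realType} {d d' : measure_display}
    {X : measurableType d} {Y : measurableType d'}
    (mu : nat -> {measure set X -> \bar R}) (c : nat -> {nonneg R})
    (k : R.-ker X ~> Y) U : measurable U ->
  mixture (mseries (fun t => mscale (c t) (mu t)) 0) k U =
  \sum_(t <oo) (c t)%:num%:E * mixture (mu t) k U.
Proof.
move=> mU; rewrite /mixture ge0_integral_measure_series//; last first.
  exact: measurable_kernel.
apply: eq_eseriesr => t _; rewrite ge0_integral_mscale//.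
exact: measurable_kernel.
Qed.

Section state_action_chain.
Context {R : realType} {d1 d2 : measure_display}
  {S : measurableType d1} {A : measurableType d2}.
Variables (pi : R.-pker S ~> A) (T : R.-pker (S * A)%type ~> S).

Definition sa_policy (s : S) : set (S * A) -> \bar R :=
  fun B => pi s (xsection B s).

Let sa_policy0 s : sa_policy s set0 = 0.
Proof. by rewrite /sa_policy xsection0 measure0. Qed.

Let sa_policy_ge0 s B : 0 <= sa_policy s B.
Proof. exact: measure_ge0. Qed.

Let sa_policy_sigma_additive s : semi_sigma_additive (sa_policy s).
Proof.
move=> B mB tB mUB; rewrite /sa_policy xsection_bigcup.
apply: measure_semi_sigma_additive.
- by move=> n; exact: measurable_xsection.
- exact: trivIset_xsection.
- by rewrite -xsection_bigcup; exact: measurable_xsection.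
Qed.

HB.instance Definition _ s := isMeasure.Build _ _ _ (sa_policy s)
  (sa_policy0 s) (sa_policy_ge0 s) (@sa_policy_sigma_additive s).

Definition msa_policy : S -> {measure set (S * A) -> \bar R} := sa_policy.

Let measurable_msa_policy B : measurable B ->
  measurable_fun [set: S] (msa_policy ^~ B).
Proof.
by move=> mB; apply: (measurable_fun_xsection_finite_kernel pi); rewrite inE.
Qed.

HB.instance Definition _ :=
  isKernel.Build _ _ _ _ _ msa_policy measurable_msa_policy.

Let msa_policy_setT s : msa_policy s setT = 1.
Proof.
rewrite /= /sa_policy (_ : xsection _ s = setT) ?prob_kernel//.
by apply/seteqP; split => a //= _; rewrite /xsection /= in_setT.
Qed.

HB.instance Definition _ :=
  Kernel_isProbability.Build _ _ _ _ _ msa_policy msa_policy_setT.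

Definition sa_transition (z : S * A) : {measure set (S * A) -> \bar R} :=
  mixture (T z) msa_policy.

Let measurable_sa_transition B : measurable B ->
  measurable_fun [set: S * A] (sa_transition ^~ B).
Proof.
move=> mB; apply: (measurable_fun_integral_kernel (measurable_kernel T)) => //.
exact: measurable_kernel.
Qed.

HB.instance Definition _ :=
  isKernel.Build _ _ _ _ _ sa_transition measurable_sa_transition.

Let sa_transition_setT z : sa_transition z setT = 1.
Proof. by apply: mixture_setT; exact: prob_kernel. Qed.

HB.instance Definition _ :=
  Kernel_isProbability.Build _ _ _ _ _ sa_transition sa_transition_setT.

Fixpoint marginal (m0 : {measure set (S * A) -> \bar R}) (n : nat)
    : {measure set (S * A) -> \bar R} :=
  if n is n'.+1 then mixture (marginal m0 n') sa_transition else m0.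

Lemma sa_marginalE (m0 : {measure set (S * A) -> \bar R}) n :
  sa_marginal pi T m0 n = marginal m0 n.
Proof. by elim: n => //= n ->. Qed.

Lemma marginal_setT (m0 : {measure set (S * A) -> \bar R}) n :
  m0 setT = 1 -> marginal m0 n setT = 1.
Proof.
move=> m0_setT; elim: n => //= n IHn.
by apply: mixture_setT => //; exact: prob_kernel.
Qed.

Lemma marginal_marginal (m0 : {measure set (S * A) -> \bar R}) t k :
  marginal (marginal m0 t) k = marginal m0 (t + k).
Proof. by elim: k => [|k /= ->]; rewrite ?addn0 ?addnS. Qed.

Lemma marginal_mseries (mu : nat -> {measure set (S * A) -> \bar R})
    (c : nat -> {nonneg R}) k B : measurable B ->
  marginal (mseries (fun t => mscale (c t) (mu t)) 0) k B =
  \sum_(t <oo) (c t)%:num%:E * marginal (mu t) k B.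
Proof.
elim: k B => [//|k IHk] B mB /=.
rewrite -mixture_mseries//; apply: eq_measure_integral => U mU _.
exact: IHk.
Qed.

Lemma sa_marginal_occupancy l (m0 : {measure set (S * A) -> \bar R}) k B :
    (0 <= l)%R -> (l < 1)%R -> measurable B ->
  sa_marginal pi T (occupancy pi T l m0) k B =
  \sum_(t <oo) (discount_weight l t)%:E * marginal m0 (t + k) B.
Proof.
move=> l_ge0 l_lt1 mB.
pose w t : {nonneg R} := NngNum (discount_weight_ge0 l_ge0 l_lt1 t).
rewrite (_ : occupancy pi T l m0 =
    mseries (fun t => mscale (w t) (marginal m0 t)) 0); last first.
  by apply/funext => U; apply: eq_eseriesr => t _; rewrite sa_marginalE.
rewrite sa_marginalE marginal_mseries//.
by apply: eq_eseriesr => t _; rewrite marginal_marginal.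
Qed.

End state_action_chain.

Theorem lemma2 (R : realType) (d1 d2 : measure_display)
  (S : measurableType d1) (A : measurableType d2)
  (alpha : probability S R) (pi : R.-pker S ~> A)
  (T : R.-pker (S * A)%type ~> S) (beta gamma : R) :
  (0 < beta)%R -> (beta < gamma)%R -> (gamma < 1)%R ->
  let rhoT := occupancy pi T gamma (init_sa alpha pi) in
  let rhoTbeta := occupancy pi T beta rhoT in
  TV_dist rhoT rhoTbeta <= (((1 - gamma) * beta) / (gamma - beta))%:E.
Proof.
move=> beta_gt0 beta_lt_gamma gamma_lt1; cbv zeta.
have gamma_ge0 : (0 <= gamma)%R by rewrite ltW// (lt_trans beta_gt0).
pose init : {measure set (S * A) -> \bar R} := mixture alpha (msa_policy pi).
have init_setT : init setT = 1.
  by apply: mixture_setT; [exact: probability_setT | exact: prob_kernel].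
rewrite -[init_sa alpha pi]/(init : set _ -> \bar R).
set rhoT := occupancy pi T gamma init; set rhoTbeta := occupancy pi T beta rhoT.
apply: ge_ereal_sup => _ [B mB <-].
have marginal01 t : 0 <= marginal pi T init t B <= 1.
  by rewrite measure_ge0 -(marginal_setT pi T init t init_setT) le_measure ?inE.
pose a t := fine (marginal pi T init t B).
have aE t : marginal pi T init t B = (a t)%:E by rewrite fineK_in01.
have a01 t : (0 <= a t <= 1)%R by exact: fine_in01.
have -> : rhoT B = discounted_mean gamma a.
  by apply: eq_eseriesr => t _; rewrite sa_marginalE aE EFinM.
have -> : rhoTbeta B = discounted_mean beta
    (fun k => fine (discounted_mean gamma (fun t => a (t + k)%N))).
  apply: eq_eseriesr => k _; rewrite sa_marginal_occupancy//.
  rewrite [RHS]EFinM fineK_in01; last first.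
    by apply: discounted_mean_in01 => // t; exact: a01.
  by congr (_ * _); apply: eq_eseriesr => t _; rewrite aE EFinM.
exact: discounted_mean_shift_dist.
Qed.
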